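(* Let $\gamma>0$, $v\in[0,1]^N$, $r\in[0,1]^N$, and let $$q\in\arg\max_{\rho\in\Delta(\mathcal{S})}\;\mathbb{E}_{S\sim\rho}[R(S,v,r)]-\frac{(K+1)^4}{\gamma}\sum_{i=1}^N\log\frac{1}{w_i(\rho)}.$$ Then there is an absolute constant $C>0$ (independent of $N,K,\gamma,v,r$) such that $\mathsf{dec}_\gamma(q;v,r)\le \frac{C\,NK^4}{\gamma}$.
   Context: $N\ge K\ge1$ are integers and $\mathcal{S}$ is the collection of subsets $S\subseteq[N]$ with $1\le|S|\le K$; $\Delta(\mathcal{S})$ is the set of probability distributions on $\mathcal{S}$. For $S\in\mathcal{S}$ and $v\in[0,1]^N$, $\mu(S,v)\in\mathbb{R}^{N+1}$ is the distribution on $\{0,\dots,N\}$ with $\mu_i(S,v)=\frac{v_i}{1+\sum_{j\in S}v_j}$ for $i\in S$, $\mu_0(S,v)=\frac{1}{1+\sum_{j\in S}v_j}$, and $\mu_i(S,v)=0$ otherwise. $R(S,v,r)=\frac{\sum_{i\in S}r_iv_i}{1+\sum_{i\in S}v_i}$. For $\rho\in\Delta(\mathcal{S})$, $w_i(\rho)=\sum_{S\ni i}\rho(S)$. The Decision-Estimation Coefficient of $q\in\Delta(\mathcal{S})$ is $$\mathsf{dec}_\gamma(q;v,r)=\max_{v^\star\in[0,1]^N}\max_{S^\star\in\mathcal{S}}\Big\{R(S^\star,v^\star,r)-\mathbb{E}_{S\sim q}[R(S,v^\star,r)]-\gamma\,\mathbb{E}_{S\sim q}\big[\|\mu(S,v)-\mu(S,v^\star)\|_2^2\big]\Big\}.$$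 *)

From HB Require Import structures.
From mathcomp Require Import all_boot all_order all_algebra.
From mathcomp Require Import boolp classical_sets reals constructive_ereal ereal exp.
Set Implicit Arguments. Unset Strict Implicit. Unset Printing Implicit Defensive.
Import Order.TTheory GRing.Theory Num.Theory.
Local Open Scope ring_scope.

Section MNL.
Variable R : realType.
Variables N K : nat.

(* [N] is represented by 'I_N; the collection \mathcal S of assortments *)
Definition assortment (S : {set 'I_N}) : bool := (1 <= #|S| <= K)%N.

(* Delta(\mathcal S): probability distributions on \mathcal S, as functions
   on all subsets, vanishing off \mathcal S *)
Definition is_dist (rho : {set 'I_N} -> R) : Prop :=
  (forall S, 0 <= rho S) /\ (forall S, ~~ assortment S -> rho S = 0) /\
  \sum_(S | assortment S) rho S = 1.

Definition expect (rho : {set 'I_N} -> R) (f : {set 'I_N} -> R) : R :=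
  \sum_(S | assortment S) rho S * f S.

(* mu(S,v) in R^{N+1}; coordinate None is the outside option 0,
   coordinate Some i is item i *)
Definition mu (S : {set 'I_N}) (v : 'I_N -> R) (j : option 'I_N) : R :=
  match j with
  | None => 1 / (1 + \sum_(k in S) v k)
  | Some i => if i \in S then v i / (1 + \sum_(k in S) v k) else 0
  end.

Definition sqdist_mu (S : {set 'I_N}) (v v' : 'I_N -> R) : R :=
  \sum_(j : option 'I_N) (mu S v j - mu S v' j) ^+ 2.

Definition Rev (S : {set 'I_N}) (v r : 'I_N -> R) : R :=
  (\sum_(i in S) r i * v i) / (1 + \sum_(i in S) v i).

Definition w (rho : {set 'I_N} -> R) (i : 'I_N) : R :=
  \sum_(S | assortment S && (i \in S)) rho S.

Definition in_unit_cube (v : 'I_N -> R) : Prop := forall i, 0 <= v i <= 1.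

(* The regularized objective, valued in extended reals: -oo when some
   w_i(rho) = 0 (since log(1/0) = +oo). *)
Definition objective (gamma : R) (v r : 'I_N -> R) (rho : {set 'I_N} -> R)
  : \bar R :=
  if `[< forall i, 0 < w rho i >] then
    (expect rho (fun S => Rev S v r)
     - (K.+1%:R ^+ 4 / gamma) * \sum_(i < N) ln (1 / w rho i))%:E
  else -oo%E.

Definition is_argmax_objective (gamma : R) (v r : 'I_N -> R)
  (q : {set 'I_N} -> R) : Prop :=
  is_dist q /\
  forall rho, is_dist rho -> (objective gamma v r rho <= objective gamma v r q)%E.

(* The Decision-Estimation Coefficient (the max is written as a sup) *)
Definition dec (gamma : R) (q : {set 'I_N} -> R) (v r : 'I_N -> R) : R :=
  sup [set x : R | exists (vs : 'I_N -> R) (Ss : {set 'I_N}),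
         [/\ in_unit_cube vs, assortment Ss &
         x = Rev Ss vs r - expect q (fun S => Rev S vs r)
             - gamma * expect q (fun S => sqdist_mu S v vs)]].

End MNL.

From HB Require Import structures.
From mathcomp Require Import all_boot all_order all_algebra.
From mathcomp Require Import boolp classical_sets reals constructive_ereal ereal exp.
From mathcomp Require Import ring lra.
Import Order.TTheory GRing.Theory Num.Theory.
Local Open Scope ring_scope.
Set Implicit Arguments. Unset Strict Implicit. Unset Printing Implicit Defensive.

(* Fix a competitor (v', S') and let lam = (K+1)^4 / gamma.  The gap
   R(S',v') - E_q R(S,v') splits into three pieces.
   - R(S',v') - R(S',v) is at most the l1 distance of v and v' on S'.  By AM-GM,
     |v'_i - v_i| <= lam / (2 w_i) + w_i (v_i - v'_i)^2 / (2 lam), and since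
     v_i = mu_i / mu_0 the weighted squares are at most 2 (K+1)^2 times
     E_q ||mu(S,v) - mu(S,v')||^2; this spends half of the estimation penalty.
   - R(S',v) - E_q R(S,v) + sum_(i in S') lam / (2 w_i) <= 2 lam N is the
     first-order optimality of q: compare q with the mixture (1-t) q + t 1_{S'}
     for t = 1 / (2 (1 + sum_i 1/w_i)), for which the log-barrier grows by at
     most 2 t N - sum_(i in S') t / (2 w_i).
   - On each assortment, R(S,v) - R(S,v') is at most the l1 distance of the
     choice probabilities, which AM-GM against the other half of the penalty
     bounds by K / (2 gamma).
   Hence dec <= 2 lam N + K / (2 gamma) <= 64 N K^4 / gamma. *)

Lemma big_option (V : nmodType) (I : finType) (f : option I -> V) :
  \sum_(o : option I) f o = f None + \sum_(i : I) f (Some i).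
Proof.
rewrite (bigD1 None) //=; congr (_ + _).
rewrite (reindex_omap Some id) //=; last by case.
by apply: eq_bigl => i; rewrite eqxx.
Qed.

Lemma sum_indicator (R : pzRingType) (I : finType) (P : pred I) (x0 : I)
    (g : I -> R) :
  \sum_(x | P x) ((x == x0)%:R * g x) = if P x0 then g x0 else 0.
Proof.
rewrite big_mkcond (bigD1 x0) //= big1 ?addr0.
  by case: (P x0); rewrite ?eqxx ?mul1r.
by move=> x /negbTE ->; rewrite mul0r; case: (P x).
Qed.

Lemma ln_le_subr1 (R : realType) (y : R) : 0 < y -> ln y <= y - 1.
Proof.
by move=> y0; have := @le_ln1Dx R (y - 1); rewrite addrCA subrr addr0; apply; lra.
Qed.

Lemma ln_inv_sub_le (R : realType) (a b : R) : 0 < a -> 0 < b ->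
  ln (1 / a) - ln (1 / b) <= b / a - 1.
Proof.
move=> a0 b0; have -> : 1 / a = (b / a) * (1 / b) by field; rewrite !gt_eqF.
by rewrite lnM ?posrE ?divr_gt0 // addrK ln_le_subr1 // divr_gt0.
Qed.

Lemma amgm_sqr (R : realFieldType) (c x : R) : 0 < c ->
  x <= c / 2 + x ^+ 2 / (2 * c).
Proof.
move=> c0; rewrite -subr_ge0.
have -> : c / 2 + x ^+ 2 / (2 * c) - x = (x - c) ^+ 2 / (2 * c).
  by field; rewrite gt_eqF.
by rewrite divr_ge0 ?sqr_ge0 //; lra.
Qed.

Lemma barrier_step_out (R : realType) (x t : R) : 0 < x -> 0 < t -> t <= 1 / 2 ->
  ln (1 / ((1 - t) * x)) - ln (1 / x) <= 2 * t.
Proof.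
move=> x0 t0 t12; have d0 : 0 < (1 - t) * x by rewrite mulr_gt0 //; lra.
apply: le_trans (ln_inv_sub_le d0 x0) _.
have -> : x / ((1 - t) * x) - 1 = t / (1 - t) by field; rewrite !gt_eqF //; lra.
by rewrite ler_pdivrMr; nra.
Qed.

Lemma barrier_step_in (R : realType) (x t : R) : 0 < x <= 1 -> 0 < t -> 2 * t <= x ->
  ln (1 / ((1 - t) * x + t)) - ln (1 / x) <= 2 * t - t / x / 2.
Proof.
move=> /andP[x0 x1] t0 tx; set d := (1 - t) * x + t.
have d0 : 0 < d by rewrite /d; nra.
apply: le_trans (ln_inv_sub_le d0 x0) _; rewrite -subr_ge0.
have -> : 2 * t - t / x / 2 - (x / d - 1) =
    t * (2 * x ^+ 2 + x + (4 * x - 1) * t * (1 - x)) / (2 * x * d).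
  by rewrite /d; field; rewrite -/d !gt_eqF.
by rewrite divr_ge0 ?mulr_ge0 //; nra.
Qed.

Lemma sqr_subMM_le (R : realFieldType) (a b c x y : R) : 0 <= a <= c -> 0 <= b <= c ->
  (a * x - b * y) ^+ 2 <= 2 * c ^+ 2 * (x ^+ 2 + y ^+ 2).
Proof.
move=> /andP[a0 ac] /andP[b0 bc].
have ax : (a * x) ^+ 2 <= c ^+ 2 * x ^+ 2.
  by rewrite exprMn ler_wpM2r ?sqr_ge0 ?lerXn2r ?nnegrE //; lra.
have bY : (b * y) ^+ 2 <= c ^+ 2 * y ^+ 2.
  by rewrite exprMn ler_wpM2r ?sqr_ge0 ?lerXn2r ?nnegrE //; lra.
have := sqr_ge0 (a * x + b * y); rewrite !expr2 in ax bY *; nra.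
Qed.

Section MNLSensitivity.
Variables (R : realType) (N : nat).
Implicit Types (S : {set 'I_N}) (v vs r : 'I_N -> R).

Lemma sum_cube_bounds v S : in_unit_cube v -> 0 <= \sum_(k in S) v k <= #|S|%:R.
Proof.
move=> cv; apply/andP; split; first by apply: sumr_ge0 => k _; case/andP: (cv k).
rewrite -sum1_card natr_sum; apply: ler_sum => k _; by case/andP: (cv k).
Qed.

Lemma sqdist_mu_ge0 S v vs : 0 <= sqdist_mu S v vs.
Proof. by apply: sumr_ge0 => o _; apply: sqr_ge0. Qed.

Lemma sqdist_mu_ge_pair S v vs i :
  (mu S v (Some i) - mu S vs (Some i)) ^+ 2 + (mu S v None - mu S vs None) ^+ 2
    <= sqdist_mu S v vs.
Proof.
rewrite /sqdist_mu big_option addrC lerD2r (bigD1 i) //= lerDl.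
by apply: sumr_ge0 => j _; apply: sqr_ge0.
Qed.

Lemma sqdist_mu_ge_items S v vs :
  \sum_(i in S) (mu S v (Some i) - mu S vs (Some i)) ^+ 2 <= sqdist_mu S v vs.
Proof.
rewrite /sqdist_mu big_option -[leLHS]add0r lerD ?sqr_ge0 //.
by rewrite [leLHS]big_mkcond; apply: ler_sum => j _; case: (j \in S); rewrite ?sqr_ge0.
Qed.

Lemma sqr_sub_le_sqdist_mu S v vs i : in_unit_cube v -> in_unit_cube vs -> i \in S ->
  (v i - vs i) ^+ 2 <= 2 * #|S|.+1%:R ^+ 2 * sqdist_mu S v vs.
Proof.
move=> cv cvs iS; apply: le_trans (ler_wpM2l _ (sqdist_mu_ge_pair S v vs i)); last first.
  by rewrite mulr_ge0 ?sqr_ge0.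
rewrite /mu iS.
have /andP[A0 AS] := sum_cube_bounds S cv; have /andP[B0 _] := sum_cube_bounds S cvs.
set A := \sum_(k in S) v k in A0 AS *; set B := \sum_(k in S) vs k in B0 *.
have /andP[vs0 vs1] := cvs i.
(* v_i = mu_i / mu_0, so parameter differences are combinations of choice-probability differences *)
have -> : v i - vs i = (1 + A) * (v i / (1 + A) - vs i / (1 + B))
                    - (1 + A) * vs i * (1 / (1 + A) - 1 / (1 + B)).
  by field; rewrite !gt_eqF //; lra.
apply: sqr_subMM_le; rewrite -natr1 addrC; apply/andP; split; try nra; lra.
Qed.

Lemma Rev_sub_le_sum_abs S v v' r :
  in_unit_cube v -> in_unit_cube v' -> in_unit_cube r ->
  Rev S v' r - Rev S v r <= \sum_(i in S) `|v' i - v i|.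
Proof.
move=> cv cv' cr; rewrite /Rev.
set P := \sum_(i in S) r i * v i; set P' := \sum_(i in S) r i * v' i.
have /andP[A0 _] := sum_cube_bounds S cv; have /andP[A'0 _] := sum_cube_bounds S cv'.
set A := \sum_(i in S) v i in A0 *; set A' := \sum_(i in S) v' i in A'0 *.
have P0 : 0 <= P by apply: sumr_ge0 => k _; case/andP: (cv k); case/andP: (cr k); nra.
have PA : P <= A by apply: ler_sum => k _; case/andP: (cv k); case/andP: (cr k); nra.
have cross : P' * (1 + A) - P * (1 + A') = \sum_(i in S) (v' i - v i) * (r i * (1 + A) - P).
  rewrite (eq_bigr (fun i => r i * v' i * (1 + A) - r i * v i * (1 + A) - (v' i * P - v i * P)));
    last by move=> i _; ring.
  by rewrite !sumrB -!mulr_suml -/P -/P' -/A' -/A; ring.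
have cross_le : \sum_(i in S) (v' i - v i) * (r i * (1 + A) - P)
    <= (1 + A) * \sum_(i in S) `|v' i - v i|.
  rewrite mulr_sumr; apply: ler_sum => i _.
  apply: le_trans (ler_norm _) _; rewrite normrM mulrC ler_wpM2r //.
  by case/andP: (cr i) => r0 r1; rewrite ler_norml; apply/andP; split; nra.
set T := \sum_(i in S) `|v' i - v i| in cross_le *.
have T0 : 0 <= T by apply: sumr_ge0.
rewrite -subr_ge0.
have -> : T - (P' / (1 + A') - P / (1 + A)) =
    ((1 + A) * T * (1 + A') - (P' * (1 + A) - P * (1 + A'))) / ((1 + A) * (1 + A')).
  by field; rewrite !gt_eqF //; lra.
rewrite divr_ge0 ?mulr_ge0 ?cross ?subr_ge0; try lra.
apply: le_trans cross_le _; rewrite -[leLHS]mulr1 ler_wpM2l ?mulr_ge0; lra.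
Qed.

Lemma Rev_sub_le_sum_abs_mu S v vs r : in_unit_cube r ->
  Rev S v r - Rev S vs r <= \sum_(i in S) `|mu S v (Some i) - mu S vs (Some i)|.
Proof.
move=> cr; have Rev_mu u : Rev S u r = \sum_(i in S) r i * mu S u (Some i).
  by rewrite /Rev mulr_suml; apply: eq_bigr => i iS; rewrite /mu iS mulrA.
rewrite !Rev_mu -sumrB; apply: ler_sum => i _; rewrite -mulrBr.
apply: le_trans (ler_norm _) _; rewrite normrM.
by case/andP: (cr i) => r0 r1; rewrite ger0_norm // ler_piMl.
Qed.

Lemma Rev_sub_sqdist_mu_le S v vs r (gamma : R) : 0 < gamma -> in_unit_cube r ->
  Rev S v r - Rev S vs r - gamma / 2 * sqdist_mu S v vs <= #|S|%:R / (2 * gamma).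
Proof.
move=> g0 cr; pose d i := mu S v (Some i) - mu S vs (Some i).
have term_le (x : R) : `|x| - gamma / 2 * x ^+ 2 <= 1 / (2 * gamma).
  have := @amgm_sqr _ gamma^-1 `|x|; rewrite invr_gt0 => /(_ g0).
  have -> : `|x| ^+ 2 / (2 * gamma^-1) = gamma / 2 * x ^+ 2.
    by rewrite real_normK ?num_real //; field; rewrite gt_eqF.
  have -> : gamma^-1 / 2 = 1 / (2 * gamma) by field; rewrite gt_eqF.
  lra.
have g20 : 0 <= gamma / 2 by lra.
have items := sqdist_mu_ge_items S v vs; have Rev_le := Rev_sub_le_sum_abs_mu S v vs cr.
apply: le_trans (_ : \sum_(i in S) (`|d i| - gamma / 2 * d i ^+ 2) <= _).
  by rewrite sumrB -mulr_sumr; nra.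
rewrite -sum1_card natr_sum mulr_suml; apply: ler_sum => i _.
exact: term_le.
Qed.

End MNLSensitivity.

Section Assortments.
Variables (R : realType) (N K : nat).
Implicit Types (q : {set 'I_N} -> R) (f g : {set 'I_N} -> R).

Lemma expect_cst q c : is_dist K q -> expect K q (fun=> c) = c.
Proof. by move=> [_ [_ q1]]; rewrite /expect -big_distrl /= q1 mul1r. Qed.

Lemma ler_expect q f g : is_dist K q ->
  (forall S, assortment K S -> f S <= g S) -> expect K q f <= expect K q g.
Proof. by move=> [q0 _] fg; apply: ler_sum => S KS; rewrite ler_wpM2l ?fg. Qed.

Lemma expectB q f g :
  expect K q (fun S => f S - g S) = expect K q f - expect K q g.
Proof. by rewrite /expect -sumrB; apply: eq_bigr => S _; rewrite mulrBr. Qed.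

Lemma expectZ q c f : expect K q (fun S => c * f S) = c * expect K q f.
Proof. by rewrite /expect mulr_sumr; apply: eq_bigr => S _; rewrite mulrCA. Qed.

Lemma expect_ge0 q f : is_dist K q -> (forall S, 0 <= f S) -> 0 <= expect K q f.
Proof. by move=> [q0 _] f0; apply: sumr_ge0 => S _; rewrite mulr_ge0. Qed.

Lemma w_le1 q i : is_dist K q -> w K q i <= 1.
Proof.
move=> [q0 [_ q1]]; rewrite -q1 /w [leRHS]big_mkcond [leLHS]big_mkcond.
by apply: ler_sum => S _; case: (assortment K S); case: (i \in S).
Qed.

Definition mix q S0 t : {set 'I_N} -> R :=
  fun S => (1 - t) * q S + t * (S == S0)%:R.

Lemma mix_dist q S0 t :
  is_dist K q -> assortment K S0 -> 0 <= t <= 1 -> is_dist K (mix q S0 t).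
Proof.
move=> [q0 [qS q1]] KS0 /andP[t0 t1]; split; [|split].
- by move=> S; rewrite /mix addr_ge0 ?mulr_ge0 ?subr_ge0.
- move=> S KS; rewrite /mix qS // mulr0 add0r.
  by case: eqP => [eS|_]; [rewrite eS KS0 in KS | rewrite mulr0].
- rewrite /mix big_split /= -mulr_sumr q1 mulr1.
  under [X in _ + X]eq_bigr do rewrite mulrC.
  by rewrite (sum_indicator _ S0 (fun=> t)) KS0 subrK.
Qed.

Lemma w_mix q S0 t i : assortment K S0 ->
  w K (mix q S0 t) i = (1 - t) * w K q i + t * (i \in S0)%:R.
Proof.
move=> KS0; rewrite /w /mix big_split /= -mulr_sumr; congr (_ + _).
under eq_bigr do rewrite mulrC.
by rewrite (sum_indicator _ S0 (fun=> t)) KS0; case: (i \in S0); rewrite ?mulr1 ?mulr0.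
Qed.

Lemma expect_mix q S0 t f : assortment K S0 ->
  expect K (mix q S0 t) f = (1 - t) * expect K q f + t * f S0.
Proof.
move=> KS0; rewrite /expect /mix.
under eq_bigr do rewrite mulrDl.
rewrite big_split /= mulr_sumr; congr (_ + _).
  by apply: eq_bigr => S _; rewrite mulrA.
under eq_bigr do rewrite mulrAC mulrC.
by rewrite (sum_indicator _ S0 (fun S => t * f S)) KS0.
Qed.

Definition unif_singletons : {set 'I_N} -> R :=
  fun S => N%:R^-1 * \sum_(j < N) (S == [set j])%:R.

Lemma assortment_set1 (j : 'I_N) : (1 <= K)%N -> assortment K [set j].
Proof. by move=> K1; rewrite /assortment cards1. Qed.

Lemma unif_singletons_dist : (1 <= K)%N -> (0 < N)%N -> is_dist K unif_singletons.
Proof.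
move=> K1 N0; split; [|split].
- by move=> S; rewrite mulr_ge0 ?invr_ge0 ?ler0n ?sumr_ge0.
- move=> S KS; rewrite /unif_singletons big1 ?mulr0 // => j _.
  by case: eqP => // eS; rewrite eS assortment_set1 in KS.
- rewrite /unif_singletons -mulr_sumr exchange_big /=.
  rewrite (eq_bigr (fun=> 1)) ?sumr_const ?card_ord ?mulVf ?pnatr_eq0 -?lt0n //.
  move=> j _; under eq_bigr do rewrite -[_%:R]mulr1.
  by rewrite (sum_indicator _ _ (fun=> 1)) assortment_set1.
Qed.

Lemma w_unif_singletons_gt0 i : (1 <= K)%N -> 0 < w K unif_singletons i.
Proof.
move=> K1; rewrite /w /unif_singletons -mulr_sumr exchange_big /=.
have N0 : (0 < N)%N by case: N i => [[]|].
rewrite mulr_gt0 ?invr_gt0 ?ltr0n // (bigD1 i) //= ltr_wpDr ?sumr_ge0 //.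
  by move=> j _; apply: sumr_ge0 => S _; apply: ler0n.
under eq_bigr do rewrite -[_%:R]mulr1.
by rewrite (sum_indicator _ _ (fun=> 1)) assortment_set1 // set11 ltr01.
Qed.

Lemma barrier_mix_le q S0 t : is_dist K q -> assortment K S0 -> 0 < t <= 1 / 2 ->
    (forall i, 2 * t <= w K q i) ->
  \sum_(i < N) (ln (1 / w K (mix q S0 t) i) - ln (1 / w K q i))
    <= 2 * t * N%:R - \sum_(i in S0) t / w K q i / 2.
Proof.
move=> dq KS0 /andP[t0 t12] tw.
have w0 i : 0 < w K q i by have := tw i; lra.
rewrite [X in _ - X]big_mkcond /= -[N in 2 * t * N%:R]card_ord mulr_natr.
rewrite -sumr_const -sumrB.
apply: ler_sum => i _; rewrite w_mix //.
case: (i \in S0); rewrite ?mulr1 ?mulr0 ?addr0 ?subr0.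
- by apply: barrier_step_in; rewrite ?w0 ?w_le1.
- exact: barrier_step_out.
Qed.

Section Optimality.
Variables (gamma : R) (v r : 'I_N -> R) (q : {set 'I_N} -> R).
Hypothesis q_opt : is_argmax_objective K gamma v r q.
Local Notation lam := (K.+1%:R ^+ 4 / gamma).

Lemma argmax_w_gt0 i : (1 <= K)%N -> 0 < w K q i.
Proof.
move=> K1; have N0 : (0 < N)%N by case: N i => [[]|].
have := q_opt.2 _ (unif_singletons_dist K1 N0).
rewrite /objective asboolT; last by move=> j; apply: w_unif_singletons_gt0.
by case: asboolP.
Qed.

Lemma mix_gain_le S0 t : (forall i, 0 < w K q i) -> assortment K S0 -> 0 <= t <= 1 ->
    (forall i, 0 < w K (mix q S0 t) i) ->
  t * (Rev S0 v r - expect K q (fun S => Rev S v r))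
    <= lam * \sum_(i < N) (ln (1 / w K (mix q S0 t) i) - ln (1 / w K q i)).
Proof.
move=> wq KS0 t01 wm; have := q_opt.2 _ (mix_dist q_opt.1 KS0 t01).
rewrite /objective (asboolT wm) (asboolT wq) lee_fin expect_mix // sumrB; lra.
Qed.

Hypothesis gamma_gt0 : 0 < gamma.

Lemma argmax_optimality S0 : (forall i, 0 < w K q i) -> assortment K S0 ->
  Rev S0 v r - expect K q (fun S => Rev S v r) + \sum_(i in S0) lam / w K q i / 2
    <= 2 * lam * N%:R.
Proof.
move=> wq KS0; have lam0 : 0 < lam by rewrite divr_gt0 ?exprn_gt0.
set s := \sum_(i < N) (w K q i)^-1.
have ws i : (w K q i)^-1 <= s.
  rewrite /s (bigD1 i) //= lerDl sumr_ge0 // => j _.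
  by rewrite invr_ge0 ltW.
have s0 : 0 <= s by apply: sumr_ge0 => j _; rewrite invr_ge0 ltW.
pose t := (2 * (1 + s))^-1.
have t0 : 0 < t by rewrite invr_gt0; lra.
have t12 : t <= 1 / 2 by rewrite /t mul1r lef_pV2 ?posrE; lra.
have tw i : 2 * t <= w K q i.
  have -> : 2 * t = (1 + s)^-1 by rewrite /t; field; rewrite gt_eqF //; lra.
  rewrite -[leRHS]invrK lef_pV2 ?posrE ?invr_gt0 //; have := ws i; lra.
have wm i : 0 < w K (mix q S0 t) i.
  rewrite w_mix //; have := tw i; case: (i \in S0); rewrite /= ?mulr1 ?mulr0; nra.
have t01 : 0 <= t <= 1 by apply/andP; split; lra.
have t012 : 0 < t <= 1 / 2 by apply/andP.
have gain := mix_gain_le wq KS0 t01 wm.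
have barrier := ler_wpM2l (ltW lam0) (barrier_mix_le q_opt.1 KS0 t012 tw).
have -> : \sum_(i in S0) lam / w K q i / 2 = t^-1 * (lam * \sum_(i in S0) t / w K q i / 2).
  by rewrite !mulr_sumr; apply: eq_bigr => i _; field; rewrite !gt_eqF.
by rewrite -(ler_pM2l t0) mulrDr mulVKf ?gt_eqF //; lra.
Qed.
End Optimality.

Lemma w_mul_sqr_le_expect_sqdist q (v vs : 'I_N -> R) i :
  is_dist K q -> in_unit_cube v -> in_unit_cube vs ->
  w K q i * (v i - vs i) ^+ 2
    <= 2 * K.+1%:R ^+ 2 * expect K q (fun S => sqdist_mu S v vs).
Proof.
move=> dq cv cvs; have [q0 _] := dq.
rewrite /w /expect mulr_suml mulr_sumr.
apply: le_trans (_ : \sum_(S | assortment K S && (i \in S))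
   2 * K.+1%:R ^+ 2 * (q S * sqdist_mu S v vs) <= _).
  apply: ler_sum => S /andP[/andP[_ SK] iS]; rewrite [leRHS]mulrCA ler_wpM2l //.
  apply: le_trans (sqr_sub_le_sqdist_mu cv cvs iS) _.
  by rewrite ler_wpM2r ?sqdist_mu_ge0 // ler_pM2l // lerXn2r ?nnegrE // ler_nat.
rewrite [leLHS]big_mkcond [leRHS]big_mkcond /=.
apply: ler_sum => S _; case: (assortment K S) => //=.
by case: (i \in S); rewrite ?mulr_ge0 ?sqdist_mu_ge0 ?sqr_ge0.
Qed.

Lemma Rev_sub_le_barrier_sqdist (gamma : R) q (v vs r : 'I_N -> R) S0 :
  0 < gamma -> is_dist K q -> (forall i, 0 < w K q i) ->
  in_unit_cube v -> in_unit_cube vs -> in_unit_cube r -> assortment K S0 ->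
  Rev S0 vs r - Rev S0 v r <=
    \sum_(i in S0) (K.+1%:R ^+ 4 / gamma) / w K q i / 2
    + gamma / 2 * expect K q (fun S => sqdist_mu S v vs).
Proof.
move=> g0 dq wq cv cvs cr /andP[_ S0K].
set lam := K.+1%:R ^+ 4 / gamma; set ED := expect K q _.
have lam0 : 0 < lam by rewrite divr_gt0 ?exprn_gt0.
apply: le_trans (Rev_sub_le_sum_abs S0 cv cvs cr) _.
(* AM-GM with weight lam / w_i trades each |vs_i - v_i| for a barrier term and a w-weighted square *)
apply: le_trans (_ : \sum_(i in S0) (lam / w K q i / 2 +
    w K q i * (v i - vs i) ^+ 2 / (2 * lam)) <= _).
  apply: ler_sum => i _; have wi := wq i.
  apply: le_trans (amgm_sqr _ (divr_gt0 lam0 wi)) _.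
  rewrite -distrC real_normK ?num_real // lerD2l le_eqVlt; apply/orP; left.
  by apply/eqP; field; rewrite !gt_eqF.
rewrite big_split /= lerD2l.
apply: le_trans (_ : \sum_(i in S0) (2 * K.+1%:R ^+ 2 * ED / (2 * lam)) <= _).
  apply: ler_sum => i _; rewrite ler_pM2r; first exact: w_mul_sqr_le_expect_sqdist.
  by rewrite invr_gt0 mulr_gt0.
rewrite sumr_const -[_ *+ #|S0|]mulr_natl.
have -> : #|S0|%:R * (2 * K.+1%:R ^+ 2 * ED / (2 * lam)) =
    #|S0|%:R / K.+1%:R ^+ 2 * (gamma * ED).
  by rewrite /lam; field; rewrite !gt_eqF ?exprn_gt0.
have ED0 : 0 <= ED by rewrite expect_ge0 // => S; apply: sqdist_mu_ge0.
have S0_le : #|S0|%:R / K.+1%:R ^+ 2 <= 1 / 2 :> R.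
  rewrite ler_pdivrMr ?exprn_gt0 // -[K.+1%:R]natr1.
  have : (#|S0|%:R : R) <= K%:R by rewrite ler_nat.
  have := sqr_ge0 (K%:R : R).
  by rewrite !expr2; nra.
by apply: le_trans (ler_wpM2r (mulr_ge0 (ltW g0) ED0) S0_le) _; lra.
Qed.

Lemma expect_Rev_sub_sqdist_le (gamma : R) q (v vs r : 'I_N -> R) :
  0 < gamma -> is_dist K q -> in_unit_cube r ->
  expect K q (fun S => Rev S v r) - expect K q (fun S => Rev S vs r)
    - gamma / 2 * expect K q (fun S => sqdist_mu S v vs) <= K%:R / (2 * gamma).
Proof.
move=> g0 dq cr; rewrite -expectB -expectZ -expectB -[leRHS](expect_cst _ dq).
apply: ler_expect => // S /andP[_ SK].
apply: le_trans (Rev_sub_sqdist_mu_le S v vs g0 cr) _.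
by rewrite ler_pM2r ?invr_gt0 ?mulr_gt0 ?ler_nat.
Qed.
End Assortments.

Lemma rate_le_NK4 (R : realFieldType) (N K : nat) (gamma : R) :
  (1 <= K)%N -> (K <= N)%N -> 0 < gamma ->
  2 * (K.+1%:R ^+ 4 / gamma) * N%:R + K%:R / (2 * gamma)
    <= 64 * N%:R * K%:R ^+ 4 / gamma.
Proof.
move=> K1 KN g0; rewrite -[K.+1%:R]natr1.
have k1 : 1 <= K%:R :> R by rewrite ler1n.
have kn : K%:R <= N%:R :> R by rewrite ler_nat.
set k := K%:R in k1 kn *; set n := N%:R in kn *.
have k4 : (k + 1) ^+ 4 <= 16 * k ^+ 4.
  have -> : 16 * k ^+ 4 = (2 * k) ^+ 4 by ring.
  by rewrite lerXn2r ?nnegrE //; lra.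
have kk4 : k <= k ^+ 4.
  by rewrite -[leLHS]mulr1 exprS ler_wpM2l ?exprn_ege1 //; lra.
have -> : 2 * ((k + 1) ^+ 4 / gamma) * n + k / (2 * gamma) =
    (2 * ((k + 1) ^+ 4 * n) + k / 2) / gamma by field; rewrite gt_eqF.
rewrite ler_pM2r ?invr_gt0 //; nra.
Qed.

Theorem theorem4 (R : realType) :
  exists C : R, 0 < C /\
  forall (N K : nat) (gamma : R) (v r : 'I_N -> R) (q : {set 'I_N} -> R),
    (1 <= K)%N -> (K <= N)%N -> 0 < gamma ->
    in_unit_cube v -> in_unit_cube r ->
    is_argmax_objective K gamma v r q ->
    dec K gamma q v r <= C * N%:R * K%:R ^+ 4 / gamma.
Proof.
exists 64; split=> // N K gamma v r q K1 KN g0 cv cr q_opt.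
have N0 : (0 < N)%N := leq_trans K1 KN.
have wq i := argmax_w_gt0 q_opt i K1.
apply: ge_sup.
  by exists (Rev [set Ordinal N0] v r - expect K q (fun S => Rev S v r)
    - gamma * expect K q (fun S => sqdist_mu S v v)), v, [set Ordinal N0];
    split=> //; apply: assortment_set1.
move=> _ [vs [S0 [cvs KS0 ->]]].
have estimation := Rev_sub_le_barrier_sqdist g0 q_opt.1 wq cv cvs cr KS0.
have optimality := argmax_optimality q_opt g0 wq KS0.
have averaging := expect_Rev_sub_sqdist_le v vs g0 q_opt.1 cr.
apply: le_trans (rate_le_NK4 K1 KN g0); lra.
Qed.
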